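(* Consider $\dot x=f(x,p)$ with $x\in\mathcal{D}\subset\mathbb{R}^n$, $p\in\mathcal{P}\subset\mathbb{R}^m$, satisfying assumptions A1–A4 below. Then for all $p_1,p_2\in\mathcal{P}$ with $p_1\succeq p_2$, $$\mathcal{B}(x^\ast(p_1))\subseteq\mathcal{B}(x^\ast(p_2)),\qquad \mathcal{B}(x^\bullet(p_1))\supseteq\mathcal{B}(x^\bullet(p_2)).$$ In particular, for all $p\in\mathcal{P}$, $$\mathcal{B}(x^\ast(p_{\min}))\subseteq\mathcal{B}(x^\ast(p))\subseteq\mathcal{B}(x^\ast(p_{\max})),\qquad \mathcal{B}(x^\bullet(p_{\min}))\supseteq\mathcal{B}(x^\bullet(p))\supseteq\mathcal{B}(x^\bullet(p_{\max})).$$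
   Context: The orders are standard: $x\succeq y$ iff $x-y\in\mathbb{R}^n_{\ge0}$ (similarly in $\mathbb{R}^m$), $x\gg y$ iff all components of $x-y$ are positive. $f$ is continuous in $(x,p)$ and locally Lipschitz in $x$; $\phi(t,x_0,p)$ denotes the solution with initial state $x_0$ and parameter $p$. $\mathcal{B}(x^\ast(p))$ denotes the basin of attraction of the equilibrium $x^\ast(p)$ for the system with parameter $p$ (the set of initial conditions in $\mathcal{D}$ whose solutions converge to it). The system is monotone in $x$ and $p$ if $\phi(t,x,p)\preceq\phi(t,y,q)$ for all $t\ge0$, all $x\preceq y$ in $\mathcal{D}$ and all $p\preceq q$ in $\mathcal{P}$. Bistability on $\mathcal{D}$ for a given $p$ means: $\mathcal{D}$ is forward invariant, the system has exactly two asymptotically stable equilibria $x^\ast(p),x^\bullet(p)$ in $\mathcal{D}$, solutions starting in $\mathcal{D}$ that do not converge to one of them start in the common boundary of the two basins, and $\mathrm{cl}(\mathcal{B}(x^\bullet(p)))=\mathrm{cl}(\mathcal{D}\setminus\mathcal{B}(x^\ast(p)))$. Assumptions: (A1) for every $p\in\mathcal{P}$ the system is bistable on $\mathcal{D}$ with stable equilibria $x^\ast(p)$, $x^\bullet(p)$, and the system is monotone in $x$ and $p$. (A2) $\mathcal{P}$ is compact and contains $p_{\min},p_{\max}$ with $p_{\min}\preceq p\preceq p_{\max}$ for all $p\in\mathcal{P}$. (A3) for all $p\in\mathcal{P}$: $x^\ast(p)\in\bigcap_{q\in\mathcal{P}}\mathcal{B}(x^\ast(q))$ and $x^\bullet(p)\in\bigcap_{q\in\mathcal{P}}\mathcal{B}(x^\bullet(q))$.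 (A4) $x^\bullet(p_{\min})\gg x^\ast(p_{\max})$. *)

From Stdlib Require Import Reals List.
From mathcomp Require Import ssreflect ssrbool fintype.
Open Scope R_scope.

Definition Vec (n : nat) : Type := 'I_n -> R.

Definition vle {n : nat} (x y : Vec n) : Prop := forall i : 'I_n, x i <= y i.
Definition vgg {n : nat} (x y : Vec n) : Prop := forall i : 'I_n, y i < x i.

(** Open ball of radius r for the max-norm (induces the standard topology of R^n). *)
Definition ball {n : nat} (x : Vec n) (r : R) (y : Vec n) : Prop :=
  forall i : 'I_n, Rabs (y i - x i) < r.

Definition is_open {n : nat} (U : Vec n -> Prop) : Prop :=
  forall x, U x -> exists r, 0 < r /\ forall y, ball x r y -> U y.

Definition closure {n : nat} (A : Vec n -> Prop) (x : Vec n) : Prop :=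
  forall r, 0 < r -> exists y, A y /\ ball x r y.

Definition interior {n : nat} (A : Vec n -> Prop) (x : Vec n) : Prop :=
  exists r, 0 < r /\ forall y, ball x r y -> A y.

Definition boundary {n : nat} (A : Vec n -> Prop) (x : Vec n) : Prop :=
  closure A x /\ ~ interior A x.

Definition compact_set {m : nat} (P : Vec m -> Prop) : Prop :=
  forall (I : Type) (U : I -> Vec m -> Prop),
    (forall i, is_open (U i)) ->
    (forall p, P p -> exists i, U i p) ->
    exists l : list I, forall p, P p -> exists i, In i l /\ U i p.

Definition converges_to {n : nat} (y : R -> Vec n) (x : Vec n) : Prop :=
  forall eps, 0 < eps -> exists T, forall t, T <= t -> ball x eps (y t).

Definition continuous_xp {n m : nat} (D : Vec n -> Prop) (P : Vec m -> Prop)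
    (f : Vec n -> Vec m -> Vec n) : Prop :=
  forall x p, D x -> P p -> forall eps, 0 < eps -> exists delta, 0 < delta /\
    forall y q, D y -> P q -> ball x delta y -> ball p delta q ->
      ball (f x p) eps (f y q).

Definition loc_lipschitz_x {n m : nat} (D : Vec n -> Prop) (P : Vec m -> Prop)
    (f : Vec n -> Vec m -> Vec n) : Prop :=
  forall x0 p0, D x0 -> P p0 -> exists r L, 0 < r /\
    forall y z q, D y -> D z -> P q -> ball x0 r y -> ball x0 r z -> ball p0 r q ->
      forall M, (forall j, Rabs (y j - z j) <= M) ->
        forall i, Rabs (f y q i - f z q i) <= L * M.

Definition is_flow {n m : nat} (D : Vec n -> Prop) (P : Vec m -> Prop)
    (f : Vec n -> Vec m -> Vec n) (phi : R -> Vec n -> Vec m -> Vec n) : Prop :=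
  forall x0 p, D x0 -> P p ->
    phi 0 x0 p = x0 /\
    (forall eps, 0 < eps -> exists delta, 0 < delta /\
       forall s, 0 <= s < delta -> ball x0 eps (phi s x0 p)) /\
    (forall t, 0 < t -> forall i : 'I_n,
       derivable_pt_lim (fun s => phi s x0 p i) t (f (phi t x0 p) p i)).

Definition basin {n m : nat} (D : Vec n -> Prop)
    (phi : R -> Vec n -> Vec m -> Vec n) (p : Vec m) (xe : Vec n) (x : Vec n) : Prop :=
  D x /\ converges_to (fun t => phi t x p) xe.

Definition forward_invariant {n m : nat} (D : Vec n -> Prop)
    (phi : R -> Vec n -> Vec m -> Vec n) (p : Vec m) : Prop :=
  forall x t, D x -> 0 <= t -> D (phi t x p).

Definition equilibrium {n m : nat} (D : Vec n -> Prop)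
    (f : Vec n -> Vec m -> Vec n) (p : Vec m) (xe : Vec n) : Prop :=
  D xe /\ f xe p = (fun _ => 0).

Definition asympt_stable {n m : nat} (D : Vec n -> Prop)
    (f : Vec n -> Vec m -> Vec n) (phi : R -> Vec n -> Vec m -> Vec n)
    (p : Vec m) (xe : Vec n) : Prop :=
  equilibrium D f p xe /\
  (forall eps, 0 < eps -> exists delta, 0 < delta /\
     forall y, D y -> ball xe delta y -> forall t, 0 <= t -> ball xe eps (phi t y p)) /\
  (exists delta, 0 < delta /\
     forall y, D y -> ball xe delta y -> converges_to (fun t => phi t y p) xe).

Definition bistable {n m : nat} (D : Vec n -> Prop)
    (f : Vec n -> Vec m -> Vec n) (phi : R -> Vec n -> Vec m -> Vec n)
    (p : Vec m) (xs xb : Vec n) : Prop :=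
  forward_invariant D phi p /\
  xs <> xb /\
  asympt_stable D f phi p xs /\ asympt_stable D f phi p xb /\
  (forall xe, asympt_stable D f phi p xe -> xe = xs \/ xe = xb) /\
  (forall x, D x -> ~ basin D phi p xs x -> ~ basin D phi p xb x ->
     boundary (basin D phi p xs) x /\ boundary (basin D phi p xb) x) /\
  (forall x, closure (basin D phi p xb) x <->
             closure (fun y => D y /\ ~ basin D phi p xs y) x).

Definition monotone_xp {n m : nat} (D : Vec n -> Prop) (P : Vec m -> Prop)
    (phi : R -> Vec n -> Vec m -> Vec n) : Prop :=
  forall t x y p q, 0 <= t -> D x -> D y -> P p -> P q ->
    vle x y -> vle p q -> vle (phi t x p) (phi t y q).

From Stdlib Require Import Reals Lra Classical FunctionalExtensionality.
From mathcomp Require Import ssreflect ssrbool eqtype seq fintype.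
Open Scope R_scope.

(* Monotonicity in the parameter together with (A3) gives [xs p <= xs pmax] and
   [xb pmin <= xb p] for every p.  If p2 <= p1 and a trajectory converged to
   [xs p1] under p1 and to [xb p2] under p2, monotonicity would give
   [xb p2 <= xs p1], contradicting (A4); so the basin of [xs p1] misses the basin
   of [xb p2].  A point of the basin of [xs p1] outside the basin of [xs p2] would
   then, by bistability, lie on the boundary of the basin of [xb p2], impossible
   because basins of asymptotically stable equilibria are open (relative to D).
   Openness comes from continuous dependence on initial data, which follows from
   local Lipschitz continuity by a halving bootstrap on short time intervals and
   continuous induction on time. *)

Definition vdist_le {n : nat} (x y : Vec n) (M : R) : Prop :=
  forall i, Rabs (x i - y i) <= M.

Lemma fin_uniform_pos (I : finType) (Q : I -> R -> Prop) :
  (forall i d d', 0 < d' <= d -> Q i d -> Q i d') ->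
  (forall i, exists d, 0 < d /\ Q i d) -> exists d, 0 < d /\ forall i, Q i d.
Proof.
move=> Qmon Qex.
have [d [d_gt0 Qd]] : exists d, 0 < d /\ forall i, i \in enum I -> Q i d.
{ elim: (enum I) => [|a l [d1 [d1_gt0 Qd1]]].
  - by exists 1; split => [|i]; [lra | rewrite in_nil].
  - have [d2 [d2_gt0 Qd2]] := Qex a.
    have dmin_gt0 : 0 < Rmin d1 d2 by apply: Rmin_pos.
    exists (Rmin d1 d2); split => // i; rewrite in_cons => /orP [/eqP -> | il].
    + by apply: (Qmon a d2) => //; split => //; apply: Rmin_r.
    + by apply: (Qmon i d1); [split => //; apply: Rmin_l | apply: Qd1]. }
by exists d; split => // i; apply: Qd; rewrite mem_enum.
Qed.

Lemma fin_upper_bound (I : finType) (g : I -> R) : exists V, forall i, g i <= V.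
Proof.
have [V HV] : exists V, forall i, i \in enum I -> g i <= V.
{ elim: (enum I) => [|a l [V HV]]; first by exists 0 => i; rewrite in_nil.
  exists (Rmax V (g a)) => i; rewrite in_cons => /orP [/eqP -> | il].
  - exact: Rmax_r.
  - exact: Rle_trans (HV i il) (Rmax_l _ _). }
by exists V => i; apply: HV; rewrite mem_enum.
Qed.

Lemma derivable_pt_lim_continuous (g : R -> R) t l : derivable_pt_lim g t l ->
  forall eps, 0 < eps -> exists del, 0 < del /\
    forall s, Rabs (s - t) < del -> Rabs (g s - g t) < eps.
Proof.
move=> gl eps eps_gt0.
have [a [a_gt0 Ha]] := derivable_continuous_pt g t (exist _ l gl) eps eps_gt0.
exists a; split => // s st.
have [-> | s_neq] := Req_dec s t; first by rewrite Rminus_diag Rabs_R0.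
apply: (Ha s); split; [split; [exact: I | by apply: not_eq_sym] | exact: st].
Qed.

(* [g] need only be right-continuous at [0]: the mean value theorem is applied
   on [[a, b]] for small [a > 0]. *)
Lemma mean_value_bound (g dg : R -> R) (b K : R) : 0 < b ->
  (forall c, 0 < c <= b -> derivable_pt_lim g c (dg c)) ->
  (forall c, 0 < c < b -> Rabs (dg c) <= K) ->
  (forall eps, 0 < eps -> exists del, 0 < del /\
     forall s, 0 <= s < del -> Rabs (g s - g 0) < eps) ->
  Rabs (g b - g 0) <= K * b.
Proof.
move=> b_gt0 g_der dg_le g_rcont; apply: Rle_plus_epsilon => eps eps_gt0.
have [del [del_gt0 Hdel]] := g_rcont eps eps_gt0.
set a := Rmin (del / 2) (b / 2).
have a_gt0 : 0 < a by apply: Rmin_pos; lra.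
have a_lt_b : a < b by apply: Rle_lt_trans (Rmin_r _ _) _; lra.
have a_lt_del : a < del by apply: Rle_lt_trans (Rmin_l _ _) _; lra.
have [c [Hc c_ab]] := MVT_cor2 g dg a b a_lt_b (fun c Hc => g_der c ltac:(lra)).
have dgc := dg_le c ltac:(lra).
have K_ge0 : 0 <= K := Rle_trans _ _ _ (Rabs_pos _) dgc.
have far : Rabs (g b - g a) <= K * (b - a).
{ rewrite Hc Rabs_mult (Rabs_right (b - a)); last lra.
  by apply: Rmult_le_compat_r; lra. }
have near := Hdel a ltac:(lra).
replace (g b - g 0) with ((g b - g a) + (g a - g 0)) by ring.
apply: Rle_trans (Rabs_triang _ _) _; nra.
Qed.

Lemma real_continuous_induction (Q : R -> Prop) :
  (forall s, 0 <= s -> (forall t, 0 <= t < s -> Q t) ->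
     exists h, 0 < h /\ forall t, s <= t < s + h -> Q t) ->
  forall t, 0 <= t -> Q t.
Proof.
move=> Qstep t0 t0_ge0; apply: NNPP => notQt0.
set E := fun s => 0 <= s /\ forall t, 0 <= t < s -> Q t.
have E_le_t0 : forall s, E s -> s <= t0.
{ move=> s [s_ge0 Qs]; apply: Rnot_lt_le => t0_lt_s.
  by apply: notQt0; apply: Qs; lra. }
have E0 : E 0 by split; [lra | move=> t; lra].
have [S [S_ub S_lub]] := completeness E (ex_intro _ t0 E_le_t0) (ex_intro _ 0 E0).
have S_ge0 : 0 <= S := S_ub 0 E0.
have Q_below_S : forall t, 0 <= t < S -> Q t.
{ move=> t Ht; apply: NNPP => notQt.
  have : S <= t.
  { apply: S_lub => s [s_ge0 Qs]; apply: Rnot_lt_le => t_lt_s.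
    by apply: notQt; apply: Qs; lra. }
  lra. }
have [h [h_gt0 Qh]] := Qstep S S_ge0 Q_below_S.
have ESh : E (S + h).
{ split; first lra.
  move=> t Ht; have [t_lt_S | S_le_t] := Rlt_or_le t S.
  - by apply: Q_below_S; lra.
  - by apply: Qh; lra. }
have := S_ub _ ESh; lra.
Qed.

Lemma le_double_of_halving_bounds (Q : R -> Prop) (x M b0 : R) :
  Q b0 -> (forall b, Q b -> Q (M + b / 2)) -> (forall b, Q b -> x <= b) ->
  x <= 2 * M.
Proof.
move=> Qb0 Qhalf x_le.
have Qk : forall k, Q (2 * M + (b0 - 2 * M) * (/ 2) ^ k).
{ elim=> [|k IH].
  - by replace (2 * M + (b0 - 2 * M) * (/ 2) ^ 0) with b0 by (simpl; ring).
  - replace (2 * M + (b0 - 2 * M) * (/ 2) ^ S k)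
      with (M + (2 * M + (b0 - 2 * M) * (/ 2) ^ k) / 2) by (simpl; field).
    exact: Qhalf. }
have [b0_le | b0_gt] := Rle_or_lt b0 (2 * M); first by have := x_le _ Qb0; lra.
apply: Rle_plus_epsilon => eps eps_gt0.
have [N HN] := pow_lt_1_zero (/ 2) ltac:(rewrite Rabs_right; lra)
  (eps / (b0 - 2 * M)) ltac:(apply: Rdiv_lt_0_compat; lra).
have := HN N (le_n N); rewrite Rabs_right; last by apply: Rle_ge; apply: pow_le; lra.
move=> /(Rmult_lt_compat_l (b0 - 2 * M)) small.
have := small ltac:(lra).
replace ((b0 - 2 * M) * (eps / (b0 - 2 * M))) with eps by (field; lra).
have := x_le _ (Qk N); lra.
Qed.

Section Solutions.
Context {n m : nat} (D : Vec n -> Prop) (f : Vec n -> Vec m -> Vec n) (p : Vec m).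

Definition is_solution (u : R -> Vec n) : Prop :=
  (forall s, 0 <= s -> D (u s)) /\
  (forall eps, 0 < eps -> exists del, 0 < del /\
     forall s, 0 <= s < del -> ball (u 0) eps (u s)) /\
  (forall t, 0 < t -> forall i, derivable_pt_lim (fun s => u s i) t (f (u t) p i)).

Lemma solution_continuous u : is_solution u -> forall s, 0 < s ->
  forall eps, 0 < eps -> exists del, 0 < del /\
    forall t, Rabs (t - s) < del -> ball (u s) eps (u t).
Proof.
move=> [_ [_ u_der]] s s_gt0 eps eps_gt0.
have [d [d_gt0 Hd]] := fin_uniform_pos _
  (fun i del => forall t, Rabs (t - s) < del -> Rabs (u t i - u s i) < eps)
  ltac:(move=> i d d' Hd' H t Ht; apply: H; lra)
  (fun i => derivable_pt_lim_continuous _ _ _ (u_der s s_gt0 i) eps eps_gt0).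
by exists d; split => // t Ht i; apply: Hd.
Qed.

Lemma solution_right_continuous u : is_solution u -> forall s, 0 <= s ->
  forall eps, 0 < eps -> exists del, 0 < del /\
    forall t, s <= t < s + del -> ball (u s) eps (u t).
Proof.
move=> u_sol s s_ge0 eps eps_gt0.
have [-> | s_neq0] := Req_dec s 0.
- have [d [d_gt0 Hd]] := proj1 (proj2 u_sol) eps eps_gt0.
  by exists d; split => // t Ht; apply: Hd; lra.
- have [d [d_gt0 Hd]] := solution_continuous u u_sol s ltac:(lra) eps eps_gt0.
  by exists d; split => // t Ht; apply: Hd; rewrite Rabs_right; lra.
Qed.

Lemma solution_component_right_continuous u i : is_solution u ->
  forall eps, 0 < eps -> exists del, 0 < del /\
    forall s, 0 <= s < del -> Rabs (u s i - u 0 i) < eps.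
Proof.
move=> [_ [u_rcont _]] eps eps_gt0.
have [d [d_gt0 Hd]] := u_rcont eps eps_gt0.
by exists d; split => // s Hs; apply: Hd.
Qed.

Lemma solution_difference_right_continuous u v i :
  is_solution u -> is_solution v ->
  forall eps, 0 < eps -> exists del, 0 < del /\
    forall s, 0 <= s < del -> Rabs ((u s i - v s i) - (u 0 i - v 0 i)) < eps.
Proof.
move=> u_sol v_sol eps eps_gt0.
have [d1 [d1_gt0 Hd1]] :=
  solution_component_right_continuous u i u_sol (eps / 2) ltac:(lra).
have [d2 [d2_gt0 Hd2]] :=
  solution_component_right_continuous v i v_sol (eps / 2) ltac:(lra).
exists (Rmin d1 d2); split; first exact: Rmin_pos.
move=> s Hs; have := Rmin_l d1 d2; have := Rmin_r d1 d2 => m2 m1.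
have := Hd1 s ltac:(lra); have := Hd2 s ltac:(lra).
replace (u s i - v s i - (u 0 i - v 0 i)) with ((u s i - u 0 i) - (v s i - v 0 i)) by ring.
move=> H2 H1; apply: Rle_lt_trans (Rabs_triang _ _) _; rewrite Rabs_Ropp; lra.
Qed.

Lemma solution_shift u T : is_solution u -> 0 <= T ->
  is_solution (fun s => u (T + s)).
Proof.
move=> u_sol T_ge0; split; [|split].
- by move=> s s_ge0; apply: (proj1 u_sol); lra.
- move=> eps eps_gt0.
  have [d [d_gt0 Hd]] := solution_right_continuous u u_sol T T_ge0 eps eps_gt0.
  by exists d; split => // s Hs; rewrite Rplus_0_r; apply: Hd; lra.
- move=> t t_gt0 i eps eps_gt0.
  have [d Hd] := proj2 (proj2 u_sol) (T + t) ltac:(lra) i eps eps_gt0.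
  exists d => h h_neq0 h_small /=.
  replace (T + (t + h)) with (T + t + h) by ring.
  exact: Hd.
Qed.

Lemma solution_stays_in_ball z0 r V : 0 < r -> 0 < V ->
  (forall w, D w -> ball z0 r w -> forall i, Rabs (f w p i) <= V) ->
  forall u, is_solution u -> ball z0 (r / 2) (u 0) ->
  forall t, 0 <= t <= r / (4 * V) -> ball z0 r (u t).
Proof.
move=> r_gt0 V_gt0 f_le u u_sol u0_near.
set h := r / (4 * V).
have hV : h * V = r / 4 by rewrite /h; field; lra.
suff stay : forall t, 0 <= t -> t <= h -> ball z0 r (u t)
  by move=> t [t_ge0 t_le]; apply: stay.
apply: (real_continuous_induction (fun t => t <= h -> ball z0 r (u t))) => s s_ge0 IH.
have [s_le_h | s_gt_h] := Rle_or_lt s h; last by exists 1; split => [|t Ht t_le]; lra.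
have us_near : forall i, Rabs (u s i - z0 i) < 3 * r / 4.
{ move=> i; have u0i := u0_near i.
  have [-> | s_neq0] := Req_dec s 0; first lra.
  have moved : Rabs (u s i - u 0 i) <= V * s.
  { apply: (mean_value_bound (fun t => u t i) (fun c => f (u c) p i)); first lra.
    - by move=> c Hc; apply: (proj2 (proj2 u_sol)); lra.
    - by move=> c Hc; apply: f_le; [apply: (proj1 u_sol); lra | apply: IH; lra].
    - exact: solution_component_right_continuous. }
  replace (u s i - z0 i) with ((u s i - u 0 i) + (u 0 i - z0 i)) by ring.
  apply: Rle_lt_trans (Rabs_triang _ _) _.
  have : V * s <= h * V by rewrite (Rmult_comm h); apply: Rmult_le_compat_l; lra.
  lra. }
have [d [d_gt0 Hd]] := solution_right_continuous u u_sol s s_ge0 (r / 4) ltac:(lra).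
exists d; split => // t Ht _ i.
have := Hd t Ht i; have := us_near i.
replace (u t i - z0 i) with ((u t i - u s i) + (u s i - z0 i)) by ring.
move=> H1 H2; apply: Rle_lt_trans (Rabs_triang _ _) _; lra.
Qed.

Definition lipschitz_on_ball (z0 : Vec n) (r L : R) : Prop :=
  forall y z, D y -> D z -> ball z0 r y -> ball z0 r z ->
    forall M, vdist_le y z M -> vdist_le (f y p) (f z p) (L * M).

Lemma solutions_stay_close z0 r L h u v M0 :
  lipschitz_on_ball z0 r L -> h * L <= / 2 ->
  is_solution u -> is_solution v ->
  (forall t, 0 <= t <= h -> ball z0 r (u t) /\ ball z0 r (v t)) ->
  vdist_le (u 0) (v 0) M0 ->
  forall t, 0 <= t <= h -> vdist_le (u t) (v t) (2 * M0).
Proof.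
move=> f_lip hL u_sol v_sol in_ball uv0 t Ht i.
set Q := fun b => forall t, 0 <= t <= h -> vdist_le (u t) (v t) b.
(* A bound [b] on [[0, h]] improves to [M0 + b / 2] because [h * L <= 1/2]. *)
apply: (le_double_of_halving_bounds Q _ M0 (2 * r)); last by move=> b Qb; apply: Qb.
- move=> s Hs j; have [us vs] := in_ball s Hs; have := us j; have := vs j.
  replace (u s j - v s j) with ((u s j - z0 j) - (v s j - z0 j)) by ring.
  move=> H1 H2; apply: Rle_trans (Rabs_triang _ _) _; rewrite Rabs_Ropp; lra.
- move=> b Qb s Hs j.
  have b_ge0 : 0 <= b := Rle_trans _ _ _ (Rabs_pos _) (Qb s Hs j).
  have uv0j := uv0 j.
  have [-> | s_neq0] := Req_dec s 0; first lra.
  have drift : Rabs ((u s j - v s j) - (u 0 j - v 0 j)) <= L * b * s.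
  { apply: (mean_value_bound (fun t => u t j - v t j)
      (fun c => f (u c) p j - f (v c) p j)); first lra.
    - move=> c Hc; apply: derivable_pt_lim_minus;
        [apply: (proj2 (proj2 u_sol)) | apply: (proj2 (proj2 v_sol))]; lra.
    - move=> c Hc; have [uc vc] := in_ball c ltac:(lra).
      by apply: f_lip; [apply: (proj1 u_sol); lra | apply: (proj1 v_sol); lra
                       | | | apply: Qb; lra].
    - exact: solution_difference_right_continuous. }
  have small : L * b * s <= b / 2.
  { have : s * L <= / 2.
    { have [L_ge0 | L_lt0] := Rle_or_lt 0 L; last nra.
      by apply: Rle_trans hL; apply: Rmult_le_compat_r; lra. }
    nra. }
  replace (u s j - v s j) with (((u s j - v s j) - (u 0 j - v 0 j)) + (u 0 j - v 0 j)) by ring.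
  apply: Rle_trans (Rabs_triang _ _) _; lra.
Qed.

Lemma f_bounded_on_ball z0 r L : D z0 -> 0 < r -> 0 < L ->
  lipschitz_on_ball z0 r L ->
  exists V, 0 < V /\ forall w, D w -> ball z0 r w -> forall i, Rabs (f w p i) <= V.
Proof.
move=> Dz0 r_gt0 L_gt0 lipL.
have [V0 HV0] := fin_upper_bound _ (fun i => Rabs (f z0 p i)).
have z0_ball : ball z0 r z0 by move=> j; rewrite Rminus_diag Rabs_R0.
exists (Rabs V0 + L * r + 1); split; first by have := Rabs_pos V0; nra.
move=> w Dw wr i.
have := lipL w z0 Dw Dz0 wr z0_ball r (fun j => Rlt_le _ _ (wr j)) i.
have := HV0 i; have := Rle_abs V0; have := Rabs_triang_inv (f w p i) (f z0 p i).
lra.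
Qed.

Lemma solution_eq_of_eq_before u v s : is_solution u -> is_solution v -> 0 < s ->
  (forall t, 0 <= t < s -> u t = v t) -> u s = v s.
Proof.
move=> u_sol v_sol s_gt0 uv_before; apply: functional_extensionality => i.
apply: cond_eq => eps eps_gt0.
have [d1 [d1_gt0 Hd1]] := solution_continuous u u_sol s s_gt0 (eps / 2) ltac:(lra).
have [d2 [d2_gt0 Hd2]] := solution_continuous v v_sol s s_gt0 (eps / 2) ltac:(lra).
set d := Rmin (Rmin d1 d2) s.
have d_gt0 : 0 < d by apply: Rmin_pos => //; apply: Rmin_pos.
have d_le_s : d <= s := Rmin_r _ _.
have d_le_d1 : d <= d1 := Rle_trans _ _ _ (Rmin_l _ _) (Rmin_l _ _).
have d_le_d2 : d <= d2 := Rle_trans _ _ _ (Rmin_l _ _) (Rmin_r _ _).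
have near_s : Rabs (s - d / 2 - s) < d by rewrite Rabs_left; lra.
have := Hd1 (s - d / 2) ltac:(lra) i; have := Hd2 (s - d / 2) ltac:(lra) i.
rewrite (uv_before (s - d / 2)); last lra.
replace (u s i - v s i) with ((v (s - d / 2) i - v s i) - (v (s - d / 2) i - u s i)) by ring.
move=> H2 H1; apply: Rle_lt_trans (Rabs_triang _ _) _; rewrite Rabs_Ropp; lra.
Qed.

Context (P : Vec m -> Prop).
Hypotheses (f_lip : loc_lipschitz_x D P f) (Pp : P p).

Lemma lipschitz_on_ball_near z0 : D z0 ->
  exists r L, 0 < r /\ 0 < L /\ lipschitz_on_ball z0 r L.
Proof.
move=> Dz0; have [r [L [r_gt0 HL]]] := f_lip z0 p Dz0 Pp.
exists r, (Rabs L + 1); split => //; split; first by have := Rabs_pos L; lra.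
move=> y z Dy Dz yr zr M yzM i.
have M_ge0 : 0 <= M := Rle_trans _ _ _ (Rabs_pos _) (yzM i).
have p_ball : ball p r p by move=> j; rewrite Rminus_diag Rabs_R0.
apply: Rle_trans (HL y z p Dy Dz Pp yr zr p_ball M yzM i) _.
have := Rle_abs L; nra.
Qed.

Lemma local_estimate z0 : D z0 -> exists rho h, 0 < rho /\ 0 < h /\
  forall u v M0, is_solution u -> is_solution v ->
    ball z0 rho (u 0) -> ball z0 rho (v 0) -> vdist_le (u 0) (v 0) M0 ->
    forall t, 0 <= t <= h -> vdist_le (u t) (v t) (2 * M0).
Proof.
move=> Dz0.
have [r [L [r_gt0 [L_gt0 lipL]]]] := lipschitz_on_ball_near z0 Dz0.
have [V [V_gt0 f_le]] := f_bounded_on_ball z0 r L Dz0 r_gt0 L_gt0 lipL.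
set h := Rmin (r / (4 * V)) (/ (2 * L)).
have h_gt0 : 0 < h.
{ by apply: Rmin_pos; [apply: Rdiv_lt_0_compat | apply: Rinv_0_lt_compat]; lra. }
have h_le : h <= r / (4 * V) := Rmin_l _ _.
have hL : h * L <= / 2.
{ have : h * L <= / (2 * L) * L by apply: Rmult_le_compat_r; [lra | apply: Rmin_r].
  by replace (/ (2 * L) * L) with (/ 2) by (field; lra). }
exists (r / 2), h; split; first lra; split => // u v M0 u_sol v_sol u0 v0.
apply: (solutions_stay_close z0 r L h) => // t Ht.
by split; apply: (solution_stays_in_ball z0 r V) => //; lra.
Qed.

Lemma solution_unique u v : is_solution u -> is_solution v -> u 0 = v 0 ->
  forall t, 0 <= t -> u t = v t.
Proof.
move=> u_sol v_sol uv0.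
apply: real_continuous_induction => s s_ge0 uv_before.
have uvs : u s = v s.
{ have [-> | s_neq0] := Req_dec s 0; first exact: uv0.
  by apply: solution_eq_of_eq_before => //; lra. }
have [rho [h [rho_gt0 [h_gt0 close]]]] := local_estimate (u s) (proj1 u_sol s s_ge0).
exists h; split => // t Ht; apply: functional_extensionality => i.
have := close _ _ 0 (solution_shift u s u_sol s_ge0) (solution_shift v s v_sol s_ge0)
  ltac:(by move=> j /=; rewrite Rplus_0_r Rminus_diag Rabs_R0)
  ltac:(by move=> j /=; rewrite Rplus_0_r -uvs Rminus_diag Rabs_R0)
  ltac:(by move=> j /=; rewrite Rplus_0_r uvs Rminus_diag Rabs_R0; lra)
  (t - s) ltac:(lra) i => /=.
replace (s + (t - s)) with t by ring; rewrite Rmult_0_r => uv_t.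
apply: cond_eq => eps eps_gt0; lra.
Qed.

End Solutions.

Definition rel_open {n : nat} (D U : Vec n -> Prop) : Prop :=
  forall x, U x -> exists r, 0 < r /\ forall y, D y -> ball x r y -> U y.

Section Flow.
Context {n m : nat} (D : Vec n -> Prop) (P : Vec m -> Prop)
  (f : Vec n -> Vec m -> Vec n) (phi : R -> Vec n -> Vec m -> Vec n) (p : Vec m).
Hypotheses (f_lip : loc_lipschitz_x D P f) (Pp : P p)
  (phi_sol : forall y, D y -> is_solution D f p (fun t => phi t y p))
  (phi0 : forall y, D y -> phi 0 y p = y).

Lemma flow_shift y T s : D y -> 0 <= T -> 0 <= s ->
  phi (T + s) y p = phi s (phi T y p) p.
Proof.
move=> Dy T_ge0 s_ge0.
have DyT : D (phi T y p) := proj1 (phi_sol y Dy) T T_ge0.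
apply: (solution_unique D f p P f_lip Pp (fun s => phi (T + s) y p)
  (fun s => phi s (phi T y p) p)) => //.
- exact: (solution_shift D f p _ T (phi_sol y Dy) T_ge0).
- exact: phi_sol.
- by rewrite Rplus_0_r phi0.
Qed.

Definition state_continuous_at (x : Vec n) (T : R) : Prop :=
  forall eps, 0 < eps -> exists r, 0 < r /\
    forall y, D y -> ball x r y -> ball (phi T x p) eps (phi T y p).

Lemma state_continuity_propagates x s z0 rho h : D x -> 0 <= s -> 0 < rho ->
  (forall u v M0, is_solution D f p u -> is_solution D f p v ->
     ball z0 rho (u 0) -> ball z0 rho (v 0) -> vdist_le (u 0) (v 0) M0 ->
     forall t, 0 <= t <= h -> vdist_le (u t) (v t) (2 * M0)) ->
  ball z0 (rho / 2) (phi s x p) -> state_continuous_at x s ->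
  forall t, s <= t <= s + h -> state_continuous_at x t.
Proof.
move=> Dx s_ge0 rho_gt0 close xs_near cont_s t Ht eps eps_gt0.
set e := Rmin (eps / 4) (rho / 2).
have e_gt0 : 0 < e by apply: Rmin_pos; lra.
have e_le_eps : e <= eps / 4 := Rmin_l _ _.
have e_le_rho : e <= rho / 2 := Rmin_r _ _.
have [r [r_gt0 Hr]] := cont_s e e_gt0.
exists r; split => // y Dy yr.
have ys_near := Hr y Dy yr.
have x0 : ball z0 rho (phi (s + 0) x p).
{ by rewrite Rplus_0_r => i; have := xs_near i; lra. }
have y0 : ball z0 rho (phi (s + 0) y p).
{ rewrite Rplus_0_r => i; have := xs_near i; have := ys_near i.
  replace (phi s y p i - z0 i)
    with ((phi s y p i - phi s x p i) + (phi s x p i - z0 i)) by ring.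
  move=> H1 H2; apply: Rle_lt_trans (Rabs_triang _ _) _; lra. }
have xy0 : vdist_le (phi (s + 0) x p) (phi (s + 0) y p) e.
{ by rewrite Rplus_0_r => i; rewrite Rabs_minus_sym; apply: Rlt_le. }
have := close _ _ e (solution_shift D f p _ s (phi_sol x Dx) s_ge0)
  (solution_shift D f p _ s (phi_sol y Dy) s_ge0) x0 y0 xy0 (t - s) ltac:(lra).
replace (s + (t - s)) with t by ring.
move=> xy_t i; have := xy_t i; rewrite Rabs_minus_sym; lra.
Qed.

Lemma flow_continuous_in_state x : D x -> forall T, 0 <= T -> state_continuous_at x T.
Proof.
move=> Dx; have x_sol := phi_sol x Dx.
have cont0 : state_continuous_at x 0.
{ by move=> eps eps_gt0; exists eps; split => // y Dy xy; rewrite !phi0. }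
apply: real_continuous_induction => s s_ge0 IH.
have [rho [h [rho_gt0 [h_gt0 close]]]] :=
  local_estimate D f p P f_lip Pp (phi s x p) (proj1 x_sol s s_ge0).
have [s' [s'_ge0 [s'_le [s'_near [xs'_near cont_s']]]]] : exists s', 0 <= s' /\
  s' <= s /\ s - s' <= h / 2 /\ ball (phi s x p) (rho / 2) (phi s' x p) /\
  state_continuous_at x s'.
{ have [-> | s_neq0] := Req_dec s 0.
  { exists 0; do 3 (split; first lra); split => // i.
    by rewrite Rminus_diag Rabs_R0; lra. }
  have [d [d_gt0 Hd]] := solution_continuous D f p _ x_sol s ltac:(lra) (rho / 2) ltac:(lra).
  have dh_gt0 : 0 < Rmin d h by apply: Rmin_pos.
  have dh_le_d : Rmin d h <= d := Rmin_l _ _.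
  have dh_le_h : Rmin d h <= h := Rmin_r _ _.
  have s'_ge0 : 0 <= Rmax 0 (s - Rmin d h / 2) := Rmax_l _ _.
  have s'_ge : s - Rmin d h / 2 <= Rmax 0 (s - Rmin d h / 2) := Rmax_r _ _.
  have s'_lt : Rmax 0 (s - Rmin d h / 2) < s by apply: Rmax_lub_lt; lra.
  exists (Rmax 0 (s - Rmin d h / 2)); do 3 (split; first lra); split.
  - by apply: Hd; rewrite Rabs_left; lra.
  - by apply: IH; lra. }
exists (h / 2); split; first lra.
move=> t Ht; apply: (state_continuity_propagates x s' (phi s x p) rho h) => //; lra.
Qed.

Lemma basin_rel_open xe : asympt_stable D f phi p xe -> rel_open D (basin D phi p xe).
Proof.
move=> [_ [_ [del [del_gt0 attract]]]] x [Dx x_conv].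
have [T0 HT0] := x_conv (del / 2) ltac:(lra).
have T_ge0 : 0 <= Rmax 0 T0 := Rmax_l _ _.
have T0_le : T0 <= Rmax 0 T0 := Rmax_r _ _.
set T := Rmax 0 T0 in T_ge0 T0_le *.
have [r [r_gt0 Hr]] := flow_continuous_in_state x Dx T T_ge0 (del / 2) ltac:(lra).
exists r; split => // y Dy yr; split => //.
have yT_conv : converges_to (fun t => phi t (phi T y p) p) xe.
{ apply: attract => [|i]; first exact: (proj1 (phi_sol y Dy) T T_ge0).
  have := Hr y Dy yr i; have := HT0 T T0_le i.
  replace (phi T y p i - xe i)
    with ((phi T y p i - phi T x p i) + (phi T x p i - xe i)) by ring.
  move=> H1 H2; apply: Rle_lt_trans (Rabs_triang _ _) _; lra. }
move=> eps eps_gt0; have [T1 HT1] := yT_conv eps eps_gt0.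
exists (T + Rmax 0 T1) => t Ht /=.
have := Rmax_l 0 T1; have := Rmax_r 0 T1 => T1_le T1_ge0.
replace t with (T + (t - T)) by ring; rewrite flow_shift //; last lra.
by apply: HT1; lra.
Qed.

End Flow.

Lemma flow_is_solution {n m : nat} (D : Vec n -> Prop) (P : Vec m -> Prop)
    (f : Vec n -> Vec m -> Vec n) (phi : R -> Vec n -> Vec m -> Vec n) p y :
  is_flow D P f phi -> forward_invariant D phi p -> P p -> D y ->
  is_solution D f p (fun t => phi t y p).
Proof.
move=> phi_flow D_inv Pp Dy; have [phi0 [phi_rcont phi_der]] := phi_flow y p Dy Pp.
split; first by move=> s; apply: D_inv.
by split => //; rewrite phi0.
Qed.

Lemma converges_to_vle {n : nat} (u v : R -> Vec n) a b :
  converges_to u a -> converges_to v b -> (forall t, 0 <= t -> vle (u t) (v t)) ->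
  vle a b.
Proof.
move=> ua vb uv i; apply: Rnot_lt_le => ba.
have [T1 HT1] := ua ((a i - b i) / 2) ltac:(lra).
have [T2 HT2] := vb ((a i - b i) / 2) ltac:(lra).
have t_ge0 : 0 <= Rmax 0 (Rmax T1 T2) := Rmax_l _ _.
have T1_le : T1 <= Rmax 0 (Rmax T1 T2) := Rle_trans _ _ _ (Rmax_l _ _) (Rmax_r _ _).
have T2_le : T2 <= Rmax 0 (Rmax T1 T2) := Rle_trans _ _ _ (Rmax_r _ _) (Rmax_r _ _).
have := uv _ t_ge0 i; have /Rabs_def2 := HT1 _ T1_le i; have /Rabs_def2 := HT2 _ T2_le i.
lra.
Qed.

Lemma vec_neq_index {n : nat} (x y : Vec n) : x <> y -> exists i : 'I_n, x i <> y i.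
Proof.
move=> xy; apply: NNPP => no_i; apply: xy; apply: functional_extensionality => i.
by apply: NNPP => xyi; apply: no_i; exists i.
Qed.

Lemma rel_open_disjoint_subset {n : nat} (D A B U : Vec n -> Prop) :
  (forall x, D x -> ~ A x -> ~ B x -> closure B x) -> (forall y, B y -> D y) ->
  rel_open D U -> (forall y, U y -> ~ B y) -> forall x, D x -> U x -> A x.
Proof.
move=> closB BD Uopen UB x Dx Ux; apply: NNPP => notAx.
have [r [r_gt0 Ur]] := Uopen x Ux.
have [y [By xy]] := closB x Dx notAx (UB x Ux) r r_gt0.
exact: UB y (Ur y (BD y By) xy) By.
Qed.

Section Ordering.
Context {n m : nat} (D : Vec n -> Prop) (P : Vec m -> Prop)
  (phi : R -> Vec n -> Vec m -> Vec n) (xs xb : Vec m -> Vec n) (pmin pmax : Vec m).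
Hypotheses (phi_mono : monotone_xp D P phi)
  (Ppmin : P pmin) (Ppmax : P pmax) (P_bnd : forall p, P p -> vle pmin p /\ vle p pmax)
  (xs_attracted : forall p, P p -> forall q, P q -> basin D phi q (xs q) (xs p))
  (xb_attracted : forall p, P p -> forall q, P q -> basin D phi q (xb q) (xb p))
  (gap : vgg (xb pmin) (xs pmax)).

Lemma xs_le_xs_pmax p : P p -> vle (xs p) (xs pmax).
Proof.
move=> Pp; have [Dxs xs_conv] := xs_attracted p Pp p Pp.
apply: (converges_to_vle _ _ _ _ xs_conv (proj2 (xs_attracted p Pp pmax Ppmax))).
move=> t t_ge0; apply: phi_mono => //; first exact: (fun i => Rle_refl _).
exact: (proj2 (P_bnd p Pp)).
Qed.

Lemma xb_pmin_le_xb p : P p -> vle (xb pmin) (xb p).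
Proof.
move=> Pp; have [Dxb xb_conv] := xb_attracted pmin Ppmin p Pp.
apply: (converges_to_vle _ _ _ _ (proj2 (xb_attracted pmin Ppmin pmin Ppmin)) xb_conv).
move=> t t_ge0; apply: phi_mono => //; first exact: (fun i => Rle_refl _).
exact: (proj1 (P_bnd p Pp)).
Qed.

Lemma basins_disjoint (i : 'I_n) p1 p2 : P p1 -> P p2 -> vle p2 p1 ->
  forall y, basin D phi p1 (xs p1) y -> ~ basin D phi p2 (xb p2) y.
Proof.
move=> Pp1 Pp2 p21 y [Dy y_s] [_ y_b].
have := converges_to_vle _ _ _ _ y_b y_s
  (fun t t_ge0 => phi_mono t y y p2 p1 t_ge0 Dy Dy Pp2 Pp1 (fun j => Rle_refl _) p21) i.
have := xs_le_xs_pmax p1 Pp1 i; have := xb_pmin_le_xb p2 Pp2 i; have := gap i.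
lra.
Qed.

End Ordering.

Theorem mainTheorem4 (n m : nat) (D : Vec n -> Prop) (P : Vec m -> Prop)
    (f : Vec n -> Vec m -> Vec n) (phi : R -> Vec n -> Vec m -> Vec n)
    (xs xb : Vec m -> Vec n) (pmin pmax : Vec m)
    (Hcont : continuous_xp D P f)
    (Hlip : loc_lipschitz_x D P f)
    (Hflow : is_flow D P f phi)
    (* (A1) *)
    (A1_bist : forall p, P p -> bistable D f phi p (xs p) (xb p))
    (A1_mono : monotone_xp D P phi)
    (* (A2) *)
    (A2_comp : compact_set P)
    (A2_min : P pmin) (A2_max : P pmax)
    (A2_bnd : forall p, P p -> vle pmin p /\ vle p pmax)
    (* (A3) *)
    (A3_s : forall p, P p -> forall q, P q -> basin D phi q (xs q) (xs p))
    (A3_b : forall p, P p -> forall q, P q -> basin D phi q (xb q) (xb p))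
    (* (A4) *)
    (A4 : vgg (xb pmin) (xs pmax)) :
  forall p1 p2, P p1 -> P p2 -> vle p2 p1 ->
    (forall x, basin D phi p1 (xs p1) x -> basin D phi p2 (xs p2) x) /\
    (forall x, basin D phi p2 (xb p2) x -> basin D phi p1 (xb p1) x).
Proof.
move=> p1 p2 Pp1 Pp2 p21.
have basin_open p xe : P p -> asympt_stable D f phi p xe -> rel_open D (basin D phi p xe).
{ move=> Pp; apply: (basin_rel_open D P f phi p Hlip Pp) => y Dy.
  - exact: (flow_is_solution D P f phi p y Hflow (proj1 (A1_bist p Pp)) Pp Dy).
  - exact: (proj1 (Hflow y p Dy Pp)). }
(* (A4) is vacuous when n = 0; bistability excludes that case. *)
have [i _] : exists i, xs p1 i <> xb p1 i.
{ by apply: vec_neq_index; have [_ []] := A1_bist p1 Pp1. }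
have disjoint := basins_disjoint D P phi xs xb pmin pmax A1_mono A2_min A2_max A2_bnd
  A3_s A3_b A4 i p1 p2 Pp1 Pp2 p21.
have [_ [_ [stable_s1 [_ [_ [bd1 _]]]]]] := A1_bist p1 Pp1.
have [_ [_ [_ [stable_b2 [_ [bd2 _]]]]]] := A1_bist p2 Pp2.
split => x Bx.
- apply: (rel_open_disjoint_subset D _ _ _ _ (fun y By => proj1 By)
    (basin_open p1 _ Pp1 stable_s1) disjoint x (proj1 Bx) Bx).
  by move=> y Dy notA notB; case: (bd2 y Dy notA notB) => _ [].
- apply: (rel_open_disjoint_subset D _ _ _ _ (fun y By => proj1 By)
    (basin_open p2 _ Pp2 stable_b2) (fun y By Bs => disjoint y Bs By) x (proj1 Bx) Bx).
  by move=> y Dy notA notB; case: (bd1 y Dy notB notA) => [[]].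
Qed.
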